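(* Let $\mu>0$, $\sigma\ge0$ and $r=\sigma/\mu$. Then the robust approximation ratio for selling a single item satisfies \[\mathrm{APX}(\mu,\sigma)=\inf_{A}\sup_{F\in\mathbb{F}_{\mu,\sigma}}\frac{\mathrm{OPT}(F)}{\mathrm{REV}(A;F)}\ \ge\ 1+\ln(1+r^2),\] where the infimum is over all probability distributions $A$ over nonnegative prices.
   Context: A nonnegative real random variable is $(\mu,\sigma)$-distributed if its expectation is $\mu$ and its standard deviation is at most $\sigma$; $\mathbb{F}_{\mu,\sigma}$ is the class of such distributions. Single item, single buyer with value $X\sim F$. A (possibly randomized) truthful mechanism is identified with a probability distribution $A$ over prices $p\ge0$: a price $p\sim A$ is drawn and the buyer buys iff $X\ge p$. $\mathrm{REV}(p;F)=p\Pr[X\ge p]$, $\mathrm{REV}(A;F)=\mathbb{E}_{p\sim A}[\mathrm{REV}(p;F)]$, $\mathrm{OPT}(F)=\sup_{p\ge0}\mathrm{REV}(p;F)$ (the optimal revenue over all truthful mechanisms). Ratios with zero denominator are interpreted as $+\infty$. *)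

From HB Require Import structures.
From mathcomp Require Import all_boot all_order all_algebra.
From mathcomp Require Import all_classical all_reals all_analysis.
Set Implicit Arguments. Unset Strict Implicit. Unset Printing Implicit Defensive.
Import Order.TTheory GRing.Theory Num.Theory.
Local Open Scope classical_set_scope.
Local Open Scope ring_scope.
Local Open Scope ereal_scope.

Section robust.
Variable R : realType.

Definition nonneg_dist (F : probability R R) : Prop :=
  F [set x : R | (x < 0)%R] = 0.

Definition Fclass (mu sigma : R) : set (probability R R) :=
  [set F | nonneg_dist F /\ 'E_F[idfun] = mu%:E /\
           'V_F[idfun] <= (sigma ^+ 2)%:E].

Definition REVp (p : R) (F : probability R R) : \bar R :=
  p%:E * F `[p, +oo[%classic.

Definition REV (A F : probability R R) : \bar R :=
  \int[A]_p REVp p F.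

Definition OPT (F : probability R R) : \bar R :=
  ereal_sup [set REVp p F | p in [set p : R | (0 <= p)%R]].

(* ratio with the convention x/0 = +oo; for the quantities used below
   (OPT(F), REV(A;F) in [0, mu]) both arguments are finite reals. *)
Definition ratio (a b : \bar R) : \bar R :=
  if b == 0 then +oo else (fine a / fine b)%:E.

Definition APX (mu sigma : R) : \bar R :=
  ereal_inf [set ereal_sup [set ratio (OPT F) (REV A F) | F in Fclass mu sigma]
            | A in [set A : probability R R | nonneg_dist A]].

End robust.

(* Let L = ln (1 + r^2), so that mu e^L = mu + sigma^2 / mu.  For v in [mu, mu e^L]
   the law F_v with mass mu / v at v and the rest at 0 lies in F_{mu,sigma}, has
   OPT(F_v) = mu and REV(A; F_v) = (mu / v) U(v), where U(v) = E_A[p; 0 < p <= v].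
   Hence if sup_F OPT/REV = s for some A, then v <= s U(v) on that interval.  On the
   geometric grid v_k = mu e^{kL/n}, the telescoping weights w_k = 1/v_k - 1/v_{k+1}
   (and w_n = 1/v_n) satisfy sum_k w_k p 1{0 < p <= v_k} <= 1 pointwise, so that
   sum_k w_k U(v_k) <= 1 and 1 + n (1 - e^{-L/n}) = sum_k w_k v_k <= s.  The left
   side is at least 1 + L - L^2/n, which tends to 1 + L. *)

From Pilot Require Import Defs.
From HB Require Import structures.
From mathcomp Require Import all_boot all_order all_algebra.
From mathcomp Require Import all_classical all_reals all_analysis.
From mathcomp Require Import measurable_realfun lra ring.
Set Implicit Arguments. Unset Strict Implicit. Unset Printing Implicit Defensive.
Import Order.TTheory GRing.Theory Num.Theory.
Local Open Scope classical_set_scope.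
Local Open Scope ring_scope.

Section expected_revenue.
Variable R : realType.

Definition price_revenue (v p : R) : R := p * \1_`]0, v] p.

Lemma price_revenue_ge0 v p : 0 <= price_revenue v p.
Proof.
rewrite /price_revenue indicE mem_setE in_itv /=.
by have [p_gt0|] := ltP 0 p; [rewrite mulr_ge0 // ltW | rewrite mulr0].
Qed.

Lemma price_revenue_le v p : 0 <= v -> price_revenue v p <= v.
Proof.
move=> v_ge0; rewrite /price_revenue indicE mem_setE in_itv /=.
by case: (boolP (_ && _)) => [/andP[_ p_le_v]|_]; rewrite ?mulr1 ?mulr0.
Qed.

Lemma measurable_price_revenue v : measurable_fun setT (price_revenue v).
Proof. by apply: measurable_funM => //; exact: measurable_indic. Qed.

Variable A : probability R R.
Local Open Scope ereal_scope.

Definition expected_revenue (v : R) : R := fine (\int[A]_p (price_revenue v p)%:E).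

Lemma expected_revenueE v : (0 <= v)%R ->
  \int[A]_p (price_revenue v p)%:E = (expected_revenue v)%:E.
Proof.
move=> v_ge0; have mrev := measurable_price_revenue v.
have rev_ge0 : \int[A]_p (price_revenue v p)%:E >= 0.
  by apply: integral_ge0 => p _; rewrite lee_fin price_revenue_ge0.
have rev_le : \int[A]_p (price_revenue v p)%:E <= v%:E.
  apply: (@le_trans _ _ (\int[A]_p v%:E)).
    apply: ge0_le_integral => //.
    - by move=> p _; rewrite lee_fin price_revenue_ge0.
    - exact/measurable_EFinP.
    - by move=> p _; rewrite lee_fin price_revenue_le.
  by rewrite integral_cst // [X in _ * X]probability_setT mule1.
by rewrite /expected_revenue fineK // ge0_fin_numE // (le_lt_trans rev_le) ?ltry.
Qed.

Lemma expected_revenue_ge0 v : (0 <= expected_revenue v)%R.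
Proof.
by apply: fine_ge0; apply: integral_ge0 => p _; rewrite lee_fin price_revenue_ge0.
Qed.

End expected_revenue.

Section two_point.
Variables (R : realType) (v q : R).
Hypotheses (q_ge0 : 0 <= q) (q_le1 : q <= 1).

Let q'_ge0 : 0 <= 1 - q. Proof. by rewrite subr_ge0. Qed.

Definition two_point : set R -> \bar R :=
  measure_add (mscale (NngNum q_ge0) \d_v) (mscale (NngNum q'_ge0) \d_(0 : R)).

HB.instance Definition _ := Measure.on two_point.

Lemma two_pointE S : two_point S = (q * \1_S v + (1 - q) * \1_S 0)%:E.
Proof. by rewrite /two_point measure_addE /mscale /= EFinD !EFinM. Qed.

Let two_point_setT : two_point setT = 1%E.
Proof. by rewrite two_pointE !indicT !mulr1 addrC subrK. Qed.

HB.instance Definition _ :=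
  Measure_isProbability.Build _ _ _ two_point two_point_setT.

Lemma integral_two_point (g : R -> R) : measurable_fun setT g ->
  (\int[two_point]_x (g x)%:E = (q * g v + (1 - q) * g 0)%:E)%E.
Proof.
move=> mg; have mG : measurable_fun setT (EFin \o g) by exact/measurable_EFinP.
have [mGp mGn] := (measurable_funepos mG, measurable_funeneg mG).
rewrite integralE !ge0_integral_measure_add// !ge0_integral_mscale//.
rewrite !integral_dirac// !diracT !mul1e funerpos funerneg /=.
rewrite -!EFinM -!EFinD; congr EFin.
have gE x : g x = g^\+ x - g^\- x by rewrite -[in LHS](funrposBneg g).
rewrite (gE v) (gE 0); ring.
Qed.

Lemma expectation_two_point (g : R -> R) : measurable_fun setT g ->
  ('E_two_point[g] = (q * g v + (1 - q) * g 0)%:E)%E.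
Proof. by move=> mg; rewrite unlock integral_two_point. Qed.

Lemma mean_two_point : ('E_two_point[idfun] = (q * v)%:E)%E.
Proof.
by rewrite expectation_two_point /= ?mulr0 ?addr0 //; exact: measurable_id.
Qed.

Lemma variance_two_point : ('V_two_point[idfun] = (q * (1 - q) * v ^+ 2)%:E)%E.
Proof.
rewrite /variance covariance.unlock mean_two_point /=.
rewrite expectation_two_point /=; last first.
  by apply: measurable_funM; apply: measurable_funB => //; exact: measurable_id.
by congr EFin; rewrite !fctE /=; ring.
Qed.

Lemma nonneg_two_point : 0 <= v -> nonneg_dist two_point.
Proof.
move=> v_ge0; rewrite /nonneg_dist /= two_pointE !indicE !memNset /= ?ltxx //.
  by rewrite !mulr0 addr0.
by apply/negP; rewrite -leNgt.
Qed.

Lemma two_point_Fclass mu sigma : 0 <= v -> q * v = mu ->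
  q * (1 - q) * v ^+ 2 <= sigma ^+ 2 -> Fclass mu sigma two_point.
Proof.
move=> v_ge0 qv_mu var_le; split; first exact: nonneg_two_point.
by rewrite mean_two_point variance_two_point qv_mu lee_fin.
Qed.

Lemma REVp_two_point p :
  REVp p two_point = (p * (q * \1_`]-oo, v] p + (1 - q) * \1_`]-oo, 0] p))%:E.
Proof.
by rewrite /REVp /= two_pointE -EFinM !indicE !mem_setE !in_itv /= !andbT.
Qed.

Lemma OPT_two_point : 0 < v -> OPT two_point = (q * v)%:E.
Proof.
move=> v_gt0; apply/eqP; rewrite eq_le; apply/andP; split.
- apply: ub_ereal_sup => _ [p /= p_ge0 <-].
  rewrite REVp_two_point lee_fin !indicE !mem_setE !in_itv /=.
  have [p_le0|p_gt0] := leP p 0.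
    by rewrite (@le_anti _ _ p 0) ?p_le0 ?p_ge0 // mul0r mulr_ge0 // ltW.
  rewrite mulr0 addr0 mulrCA; case: (leP p v) => [p_le_v|_] /=.
    by rewrite mulr1 ler_wpM2l.
  by rewrite !mulr0 mulr_ge0 // ltW.
- apply: ereal_sup_ubound; exists v; first exact: ltW.
  rewrite REVp_two_point !indicE !mem_setE !in_itv /= lexx leNgt v_gt0 /=.
  by rewrite mulr1 mulr0 addr0 mulrC.
Qed.

Lemma REV_two_point (A : probability R R) : 0 <= v -> nonneg_dist A ->
  REV A two_point = (q * expected_revenue A v)%:E.
Proof.
move=> v_ge0 A_nonneg.
rewrite EFinM -expected_revenueE // -ge0_integralZl //; last 2 first.
- by apply/measurable_EFinP; exact: measurable_price_revenue.
- by move=> p _; rewrite lee_fin price_revenue_ge0.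
rewrite /REV (eq_integral _ _ (fun p _ => REVp_two_point p)).
apply: ae_eq_integral => //.
- apply/measurable_EFinP; apply: measurable_funM => //.
  by apply: measurable_funD; apply: measurable_funM => //; exact: measurable_indic.
- apply/measurable_EFinP; apply: measurable_funM => //.
  exact: measurable_price_revenue.
- exists [set p | p < 0]; split => //.
  + by rewrite -[X in measurable X]set_itv_infty_o; exact: measurable_itv.
  + move=> p /= REVp_neq; rewrite ltNge; apply/negP => p_ge0; apply: REVp_neq => _.
    rewrite /price_revenue !indicE !mem_setE !in_itv /= EFinM; congr EFin.
    have [p_le0|p_gt0] := leP p 0; last by rewrite mulr0 addr0 mulrCA.
    by rewrite (@le_anti _ _ p 0) ?p_le0 ?p_ge0 // !mul0r mulr0.
Qed.

End two_point.

Section telescoping_weights.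
Variables (R : realType) (v : nat -> R) (n : nat).
Hypothesis v_gt0 : forall k, 0 < v k.
Hypothesis v_nondecreasing : {homo v : i j / (i <= j)%N >-> i <= j}.

Definition telescoping_weight k : R :=
  if (k < n)%N then (v k)^-1 - (v k.+1)^-1 else (v n)^-1.

Local Notation w := telescoping_weight.

Lemma telescoping_weight_ge0 k : 0 <= w k.
Proof.
rewrite /w; case: ifP => _; last by rewrite invr_ge0 ltW.
by rewrite subr_ge0 lef_pV2 ?posrE // v_nondecreasing.
Qed.

Lemma sum_telescoping_weight m : (m <= n)%N ->
  \sum_(m <= k < n.+1) w k = (v m)^-1.
Proof.
move=> mn; rewrite big_nat_recr //= {2}/w ltnn.
rewrite (eq_big_nat _ _ (F2 := fun k => - ((v k.+1)^-1 - (v k)^-1))); last first.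
  by move=> k /andP[_ kn]; rewrite /w kn opprB.
by rewrite sumrN telescope_sumr // opprB subrK.
Qed.

Lemma sum_telescoping_weight_price_revenue_le1 x m :
  \sum_(m <= k < n.+1) w k * price_revenue (v k) x <= 1.
Proof.
move: {2}(n.+1 - m)%N (erefl (n.+1 - m)%N) => d; elim: d m => [|d IH] m d_eq.
  by rewrite big_geq ?ler01 // -subn_eq0 d_eq.
have mn : (m <= n)%N by rewrite -ltnS -subn_gt0 d_eq.
have [/andP[x_gt0 x_le_vm]|x_out] := boolP ((0 < x) && (x <= v m)).
  rewrite (eq_big_nat _ _ (F2 := fun k => w k * x)); last first.
    move=> k /andP[mk _]; rewrite /price_revenue indicE mem_setE in_itv /= x_gt0.
    by rewrite (le_trans x_le_vm (v_nondecreasing mk)) mulr1.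
  by rewrite -mulr_suml sum_telescoping_weight // mulrC ler_pdivrMr // mul1r.
rewrite big_ltn ?ltnS // {1}/price_revenue indicE mem_setE in_itv /= (negbTE x_out).
by rewrite !mulr0 add0r IH // subnS d_eq.
Qed.

Lemma sum_telescoping_weight_expected_revenue_le1 (A : probability R R) :
  \sum_(0 <= k < n.+1) w k * expected_revenue A (v k) <= 1.
Proof.
pose f k x := (w k * price_revenue (v k) x)%:E.
have mf k : measurable_fun setT (f k).
  apply/measurable_EFinP; apply: measurable_funM => //.
  exact: measurable_price_revenue.
have f_ge0 k x : setT x -> (0 <= f k x)%E.
  by rewrite lee_fin mulr_ge0 ?telescoping_weight_ge0 ?price_revenue_ge0.
rewrite -lee_fin -sumEFin.
under eq_bigr => k _.
  rewrite EFinM -expected_revenueE ?ltW // -ge0_integralZl //; last 3 first.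
  - by apply/measurable_EFinP; exact: measurable_price_revenue.
  - by move=> x _; rewrite lee_fin price_revenue_ge0.
  - by rewrite lee_fin telescoping_weight_ge0.
  under eq_integral do rewrite -EFinM.
  over.
rewrite -(ge0_integral_sum A measurableT mf f_ge0).
apply: (@le_trans _ _ (\int[A]_x 1)%E).
  apply: ge0_le_integral => //.
  - by move=> x _; rewrite sume_ge0 // => k _; exact: f_ge0.
  - exact: emeasurable_sum.
  - move=> x _; rewrite /f sumEFin lee_fin.
    exact: sum_telescoping_weight_price_revenue_le1.
by rewrite integral_cst // mul1e [X in (X <= _)%E]probability_setT.
Qed.

End telescoping_weights.

Lemma expRN_le (R : realType) (t : R) : 0 <= t -> expR (- t) <= 1 - t + t ^+ 2.
Proof.
move=> t_ge0; have t1_gt0 : 0 < 1 + t by rewrite ltr_wpDr.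
rewrite expRN (@le_trans _ _ (1 + t)^-1) //.
  by rewrite lef_pV2 ?posrE ?expR_gt0 // expR_ge1Dx.
rewrite -[X in X <= _]div1r ler_pdivrMr //.
have : 0 <= t ^+ 3 by rewrite exprn_ge0.
rewrite !exprS expr0; nra.
Qed.

Section geometric_grid.
Variables (R : realType) (mu t : R).
Hypotheses (mu_gt0 : 0 < mu) (t_ge0 : 0 <= t).

Definition geometric_grid k : R := mu * expR (k%:R * t).

Local Notation v := geometric_grid.

Lemma geometric_grid_gt0 k : 0 < v k.
Proof. by rewrite mulr_gt0 // expR_gt0. Qed.

Lemma geometric_grid_nondecreasing : {homo v : i j / (i <= j)%N >-> i <= j}.
Proof. by move=> i j ij; rewrite ler_pM2l // ler_expR ler_wpM2r // ler_nat. Qed.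

Lemma geometric_grid_ge k : mu <= v k.
Proof.
have := geometric_grid_nondecreasing (leq0n k).
by rewrite /geometric_grid mul0r expR0 mulr1.
Qed.

Lemma sum_telescoping_weight_geometric_grid n :
  \sum_(0 <= k < n.+1) telescoping_weight v n k * v k = 1 + n%:R * (1 - expR (- t)).
Proof.
rewrite big_nat_recr //= {2}/telescoping_weight ltnn mulVf ?gt_eqF ?geometric_grid_gt0 //.
rewrite addrC; congr (_ + _).
rewrite (eq_big_nat _ _ (F2 := fun=> 1 - expR (- t))); last first.
  move=> k /andP[_ kn]; rewrite /telescoping_weight kn mulrBl.
  rewrite mulVf ?gt_eqF ?geometric_grid_gt0 // /geometric_grid -natr1 mulrDl mul1r.
  rewrite expRD expRN mulrA invfM mulrAC mulVf ?mul1r //.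
  by rewrite gt_eqF // mulr_gt0 // expR_gt0.
by rewrite sumr_const_nat subn0 mulr_natl.
Qed.

End geometric_grid.

Lemma ratio_ge0 (R : realType) (a b : R) : 0 <= a -> 0 <= b ->
  (0 <= Defs.ratio a%:E b%:E)%E.
Proof.
by move=> a_ge0 b_ge0; rewrite /Defs.ratio; case: eqP => // _; rewrite lee_fin divr_ge0.
Qed.

Lemma ratio_le_mul (R : realType) (a b s : R) : 0 <= b ->
  (Defs.ratio a%:E b%:E <= s%:E)%E -> a <= s * b.
Proof.
move=> b_ge0; rewrite /Defs.ratio eqe; case: eqP => [_|/eqP b_neq0].
  by rewrite leye_eq.
by rewrite lee_fin ler_pdivrMr // lt_def b_neq0.
Qed.

Section two_point_of_mean.
Variables (R : realType) (mu sigma v : R).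
Hypotheses (mu_gt0 : 0 < mu) (mu_le_v : mu <= v).
Hypotheses (q_ge0 : 0 <= mu / v) (q_le1 : mu / v <= 1).
Local Notation P := (two_point v q_ge0 q_le1).

Let v_gt0 : 0 < v. Proof. exact: lt_le_trans mu_le_v. Qed.

Lemma two_point_of_mean_Fclass : v <= mu + sigma ^+ 2 / mu -> Fclass mu sigma P.
Proof.
move=> v_le; apply: two_point_Fclass; first exact: ltW.
  by rewrite mulfVK // gt_eqF.
have -> : mu / v * (1 - mu / v) * v ^+ 2 = mu * v - mu ^+ 2.
  by field; rewrite gt_eqF.
have := ler_wpM2l (ltW mu_gt0) v_le.
by rewrite mulrDr mulrCA divff ?gt_eqF // mulr1 expr2; lra.
Qed.

Lemma ratio_two_point_of_mean (A : probability R R) : nonneg_dist A ->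
  Defs.ratio (OPT P) (REV A P) = Defs.ratio v%:E (expected_revenue A v)%:E.
Proof.
move=> A_nonneg; rewrite OPT_two_point // REV_two_point ?ltW // mulfVK ?gt_eqF //.
rewrite /Defs.ratio !eqe !mulf_eq0 invr_eq0 (gt_eqF mu_gt0) (gt_eqF v_gt0) /=.
case: eqP => // /eqP U_neq0.
by congr EFin; field; rewrite U_neq0 !gt_eqF.
Qed.

End two_point_of_mean.

Lemma sup_ratio_ge_geometric (R : realType) (A : probability R R) (mu sigma t : R)
    (n : nat) : nonneg_dist A -> 0 < mu -> 0 <= t ->
  geometric_grid mu t n <= mu + sigma ^+ 2 / mu ->
  ((1 + n%:R * (1 - expR (- t)))%:E <=
   ereal_sup [set Defs.ratio (OPT F) (REV A F) | F in Fclass mu sigma])%E.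
Proof.
move=> A_nonneg mu_gt0 t_ge0 vn_le.
pose v := geometric_grid mu t; pose U k := expected_revenue A (v k).
have v_gt0 k : 0 < v k by exact: geometric_grid_gt0.
have v_nondecreasing : {homo v : i j / (i <= j)%N >-> i <= j}.
  exact: geometric_grid_nondecreasing.
have mu_le_v k : mu <= v k by exact: geometric_grid_ge.
have q_ge0 k : 0 <= mu / v k by rewrite divr_ge0 // ltW.
have q_le1 k : mu / v k <= 1 by rewrite ler_pdivrMr // mul1r.
set S := ereal_sup _.
have ratio_le_S k : (k <= n)%N -> (Defs.ratio (v k)%:E (U k)%:E <= S)%E.
  move=> kn.
  rewrite -(ratio_two_point_of_mean mu_gt0 (mu_le_v k) (q_ge0 k) (q_le1 k) A_nonneg).
  apply: ereal_sup_ubound; exists (two_point (v k) (q_ge0 k) (q_le1 k)) => //.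
  exact: two_point_of_mean_Fclass (le_trans (v_nondecreasing _ _ kn) vn_le).
have S_ge0 : (0 <= S)%E.
  apply: le_trans (ratio_le_S 0%N (leq0n n)).
  by rewrite ratio_ge0 ?expected_revenue_ge0 // ltW.
move: S_ge0 ratio_le_S; case: S => [s s_ge0 ratio_le_s|_ _|//]; last exact: leey.
rewrite lee_fin -(sum_telescoping_weight_geometric_grid t mu_gt0).
apply: (@le_trans _ _ (\sum_(0 <= k < n.+1) telescoping_weight v n k * (s * U k))).
  apply: ler_sum_nat => k /andP[_ kn].
  rewrite ler_wpM2l ?telescoping_weight_ge0 //.
  by apply: ratio_le_mul (ratio_le_s k _); rewrite ?expected_revenue_ge0 // -ltnS.
under eq_bigr do rewrite mulrCA.
rewrite -mulr_sumr ler_piMr //.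
exact: sum_telescoping_weight_expected_revenue_le1.
Qed.

Theorem theorem3 (R : realType) (mu sigma : R) :
  0 < mu -> 0 <= sigma ->
  ((1 + ln (1 + (sigma / mu) ^+ 2))%:E <= APX mu sigma)%E.
Proof.
move=> mu_gt0 _; set L := ln _.
have L_ge0 : 0 <= L by rewrite ln_ge0 // lerDl sqr_ge0.
have mu_expR_L : mu * expR L = mu + sigma ^+ 2 / mu.
  by rewrite lnK ?posrE ?(lt_le_trans ltr01) ?lerDl ?sqr_ge0 //; field; rewrite gt_eqF.
apply: le_ereal_inf_tmp => _ [A A_nonneg <-]; apply/lee_addgt0Pr => e e_gt0.
pose n := (Num.Def.archi_bound (L ^+ 2 / e)).+1; pose t := L / n%:R.
have n_neq0 : n%:R != 0 :> R by rewrite pnatr_eq0.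
have L2n_le_e : L ^+ 2 / n%:R <= e.
  rewrite ler_pdivrMr ?ltr0n // mulrC -ler_pdivrMr //.
  apply: ltW (lt_le_trans (archi_boundP _) _); last by rewrite ler_nat.
  by rewrite divr_ge0 ?sqr_ge0 ?ltW.
have t_ge0 : 0 <= t by rewrite divr_ge0.
have grid_n : geometric_grid mu t n <= mu + sigma ^+ 2 / mu.
  by rewrite /geometric_grid /t mulrCA mulfV // mulr1 mu_expR_L.
apply: le_trans (leeD2r _ (sup_ratio_ge_geometric A_nonneg mu_gt0 t_ge0 grid_n)).
rewrite -EFinD lee_fin.
have : n%:R * (t - t ^+ 2) <= n%:R * (1 - expR (- t)).
  by rewrite ler_wpM2l ?ler0n //; have := expRN_le t_ge0; lra.
have -> : n%:R * (t - t ^+ 2) = L - L ^+ 2 / n%:R by rewrite /t; field.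
lra.
Qed.
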